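(* Let $d\ge 1$ be an integer and let $G$ be a triangle-free graph on $n$ vertices with maximum degree $d$. Then for every $\lambda>0$, \[ \frac{1}{n}\overline{\alpha}_G(\lambda) \;\ge\; \frac{\lambda}{1+\lambda}\cdot\frac{W(d\log(1+\lambda))}{d\log(1+\lambda)}. \]
   Context: For a graph $G$ with set of independent sets $\mathcal I(G)$ and a fugacity $\lambda>0$, the hard-core model is the probability distribution on $\mathcal I(G)$ given by $\Pr[I]=\lambda^{|I|}/P_G(\lambda)$, where $P_G(\lambda)=\sum_{J\in\mathcal I(G)}\lambda^{|J|}$ is the partition function (independence polynomial). $\overline{\alpha}_G(\lambda)=\sum_{I\in\mathcal I(G)}|I|\Pr[I]=\lambda P_G'(\lambda)/P_G(\lambda)$ is the expected size of the random independent set, and $\frac1n\overline\alpha_G(\lambda)$ is the occupancy fraction. For $z>0$, $W(z)$ (the Lambert $W$ function) denotes the unique positive real with $W(z)e^{W(z)}=z$. Logarithms are natural. *)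

From mathcomp Require Import all_boot.
From Stdlib Require Import Reals.
Set Implicit Arguments.
Unset Strict Implicit.
Unset Printing Implicit Defensive.

Definition simple_graph (n : nat) (e : rel 'I_n) : Prop :=
  (forall x, ~~ e x x) /\ (forall x y, e x y = e y x).

Definition degree (n : nat) (e : rel 'I_n) (x : 'I_n) : nat :=
  #|[set y | e x y]|.

Definition max_degree (n : nat) (e : rel 'I_n) (d : nat) : Prop :=
  (forall x, degree e x <= d) /\ (exists x, degree e x = d).

Definition triangle_free (n : nat) (e : rel 'I_n) : Prop :=
  forall x y z, ~ [&& e x y, e y z & e x z].

Definition independent (n : nat) (e : rel 'I_n) (I : {set 'I_n}) : bool :=
  [forall x in I, forall y in I, ~~ e x y].

Definition partition_fn (n : nat) (e : rel 'I_n) (lam : R) : R :=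
  \big[Rplus/0%R]_(I : {set 'I_n} | independent e I) (lam ^ #|I|)%R.

Definition hc_prob (n : nat) (e : rel 'I_n) (lam : R) (I : {set 'I_n}) : R :=
  (lam ^ #|I| / partition_fn e lam)%R.

Definition exp_size (n : nat) (e : rel 'I_n) (lam : R) : R :=
  \big[Rplus/0%R]_(I : {set 'I_n} | independent e I)
     (INR #|I| * hc_prob e lam I)%R.

(* Weight each independent set I by lam^|I| and call v uncovered by I when no
   neighbour of v lies in I.  Removing v shows that the weight of the sets
   leaving v uncovered is (1 + lam)/lam times the weight of those containing v,
   so the expected fraction y of uncovered vertices equals
   (1 + lam)/lam * alpha(lam)/n.  In a triangle-free graph N(v) is independent,
   so, fixing the part of I outside N(v), the uncovered neighbours of v may be
   added freely: Z = sum lam^|I| (1 + lam)^Y_v(I) over sets leaving v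
   uncovered, with Y_v(I) the number of uncovered neighbours of v.  Jensen's
   inequality for exp then gives Pr[v uncovered] >= (1 + lam)^(-E Y_v), and
   since an uncovered vertex is counted in Y_v for at most d vertices v,
   averaging yields y >= exp (- d log (1 + lam) y), i.e.
   y >= W(d log (1 + lam)) / (d log (1 + lam)). *)

From HB Require Import structures.
From mathcomp Require Import all_boot.
From Stdlib Require Import Reals Lra.

Set Implicit Arguments.
Unset Strict Implicit.
Unset Printing Implicit Defensive.

HB.instance Definition _ := Monoid.isComLaw.Build R 0%R Rplus
  (fun x y z => esym (Rplus_assoc x y z)) Rplus_comm Rplus_0_l.
HB.instance Definition _ := Monoid.isComLaw.Build R 1%R Rmult
  (fun x y z => esym (Rmult_assoc x y z)) Rmult_comm Rmult_1_l.
HB.instance Definition _ := Monoid.isMulLaw.Build R 0%R Rmult Rmult_0_l Rmult_0_r.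
HB.instance Definition _ := Monoid.isAddLaw.Build R Rmult Rplus
  Rmult_plus_distr_r Rmult_plus_distr_l.

Section RealFacts.
Local Open Scope R_scope.
Variable T : finType.
Implicit Types (P : pred T) (F G : T -> R).

Lemma Rle_big P F G : (forall i, P i -> F i <= G i) ->
  \big[Rplus/0]_(i | P i) F i <= \big[Rplus/0]_(i | P i) G i.
Proof.
move=> FG; apply: (big_ind2 (fun x y => x <= y)) => //; first lra.
by move=> *; apply: Rplus_le_compat.
Qed.

Lemma Rle0_big P F : (forall i, P i -> 0 <= F i) -> 0 <= \big[Rplus/0]_(i | P i) F i.
Proof. by move=> F0; apply: (big_ind (fun x => 0 <= x)) => // *; lra. Qed.

Lemma iter_Rplus k (a : R) : iter k (Rplus a) 0 = INR k * a.
Proof.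
elim: k => [|k IH]; first by rewrite /=; lra.
by rewrite S_INR /= IH; lra.
Qed.

Lemma big_Rplus_const (A : pred T) (a : R) : \big[Rplus/0]_(i in A) a = INR #|A| * a.
Proof. by rewrite big_const iter_Rplus. Qed.

Lemma big_Rmult_const (A : pred T) (a : R) : \big[Rmult/1]_(i in A) a = a ^ #|A|.
Proof. by rewrite big_const; elim: #|A| => //= k ->. Qed.

Lemma INR_big P (f : T -> nat) :
  INR (\sum_(i | P i) f i) = \big[Rplus/0]_(i | P i) INR (f i).
Proof. exact: (big_morph INR plus_INR). Qed.

Lemma sum_subsets_pow (S : {set T}) (a : R) :
  \big[Rplus/0]_(A : {set T} | A \subset S) a ^ #|A| = (1 + a) ^ #|S|.
Proof.
have := @bigA_distr R 0 1 Rmult Rplus T (fun i => if i \in S then a else 0) (fun _ => 1).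
have -> : \big[Rmult/1]_i ((if i \in S then a else 0) + 1) = (1 + a) ^ #|S|.
  rewrite -big_Rmult_const [RHS]big_mkcond; apply: eq_bigr => i _.
  by case: (i \in S); lra.
move=> ->; rewrite big_mkcond; apply: eq_big => // J _; symmetry.
case sub: (J \subset S).
  rewrite -big_Rmult_const [RHS]big_mkcond; apply: eq_bigr => i _.
  by case iJ: (i \in J); rewrite // (subsetP sub _ iJ).
have [i iJ iS] := subsetPn (negbT sub).
by rewrite (bigD1 i) //= iJ (negbTE iS) Rmult_0_l.
Qed.

(* Jensen's inequality for the convex map [x |-> exp (- L x)], via its tangent at [m]. *)
Lemma sum_exp_tangent_lower P (a x : T -> R) (L m : R) :
  (forall i, P i -> 0 <= a i) ->
  exp (- (L * m)) * ((1 + L * m) * \big[Rplus/0]_(i | P i) a i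
                     - L * \big[Rplus/0]_(i | P i) (a i * x i))
  <= \big[Rplus/0]_(i | P i) (a i * exp (- (L * x i))).
Proof.
move=> a0.
have tangent i : exp (- (L * m)) * (1 - L * (x i - m)) <= exp (- (L * x i)).
  have -> : - (L * x i) = - (L * m) + - (L * (x i - m)) by ring.
  rewrite exp_plus; apply: Rmult_le_compat_l; first exact: Rlt_le (exp_pos _).
  by have := exp_ineq1_le (- (L * (x i - m))); lra.
set K := exp (- (L * m)) in tangent *.
apply: (Rle_trans _ (\big[Rplus/0]_(i | P i) (a i * (K * (1 - L * (x i - m)))))).
  right; rewrite [RHS](eq_bigr (fun i => K * (1 + L * m) * a i + - (K * L) * (a i * x i)));
    last by move=> i _; ring.
  by rewrite big_split -!big_distrr /=; ring.
by apply: Rle_big => i Pi; apply: Rmult_le_compat_l; [apply: a0 | apply: tangent].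
Qed.

Lemma pow_mul_exp_opp_ln (q : R) k : 0 < q -> q ^ k * exp (- (ln q * INR k)) = 1.
Proof.
move=> q_gt0; rewrite -Rpower_pow // /Rpower (Rmult_comm (ln q)) exp_Ropp Rinv_r //.
exact: exp_neq_0.
Qed.

Lemma lambert_lower_bound (a w y : R) : 0 < a -> w * exp w = a ->
  exp (- (a * y)) <= y -> w / a <= y.
Proof.
move=> a0 wW ey; apply: Rnot_lt_le => lt_y.
have w0 : w <> 0 by move=> w0; move: wW; rewrite w0; lra.
have ew : exp (- w) = w / a by rewrite exp_Ropp -wW; field; split; [exact: exp_neq_0 |].
have lt_ay : a * y < w.
  by have := Rmult_lt_compat_l _ _ _ a0 lt_y; have -> : a * (w / a) = w by field; lra.
by have := exp_increasing _ _ (Ropp_lt_contravar _ _ lt_ay); lra.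
Qed.
End RealFacts.

Section Graph.
Variables (n : nat) (e : rel 'I_n).
Hypothesis e_simple : simple_graph e.

Definition nbhd (v : 'I_n) : {set 'I_n} := [set u | e v u].

Definition uncovered (I : {set 'I_n}) : {set 'I_n} := [set v | [forall u in I, ~~ e v u]].

Lemma edge_irr x : e x x = false.
Proof. by apply/negbTE; case: e_simple. Qed.

Lemma edge_sym x y : e x y = e y x.
Proof. by case: e_simple. Qed.

Lemma independentP (I : {set 'I_n}) :
  reflect (forall x y, x \in I -> y \in I -> ~~ e x y) (independent e I).
Proof.
apply: (iffP forall_inP) => [H x y xI yI | H x xI].
  exact: (forall_inP (H x xI)).
by apply/forall_inP => y yI; apply: H.
Qed.

Lemma uncoveredP (I : {set 'I_n}) v :
  reflect (forall u, u \in I -> ~~ e v u) (v \in uncovered I).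
Proof. by rewrite inE; apply: forall_inP. Qed.

Lemma card_nbhd_setI (A : {set 'I_n}) v : #|nbhd v :&: A| = \sum_(u in A) e v u.
Proof.
rewrite -sum1_card (eq_bigl (fun u => (u \in A) && e v u)) => [|u]; last first.
  by rewrite !inE andbC.
by rewrite big_mkcondr; apply: eq_bigr => u _; case: (e v u).
Qed.

Lemma sum_card_nbhd_setI (A : {set 'I_n}) (d : nat) : (forall v, degree e v <= d) ->
  \sum_v #|nbhd v :&: A| <= #|A| * d.
Proof.
move=> deg_le; rewrite -sum_nat_const.
under eq_bigr => v _ do rewrite card_nbhd_setI.
rewrite exchange_big; apply: leq_sum => u _; apply: leq_trans (deg_le u).
rewrite /degree -sum1dep_card [X in _ <= X]big_mkcond.
by apply: leq_sum => v _; rewrite edge_sym; case: (e u v).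
Qed.

Lemma uncovered_disjoint (I : {set 'I_n}) v : v \in uncovered I -> [disjoint I & nbhd v].
Proof.
move/uncoveredP=> vI; rewrite disjoint_subset; apply/subsetP => u uI.
by rewrite !inE; apply: vI.
Qed.

Lemma independent_setD (I A : {set 'I_n}) : independent e I -> independent e (I :\: A).
Proof.
by move/independentP=> indI; apply/independentP => x y /setDP[xI _] /setDP[yI _]; apply: indI.
Qed.

Lemma independent_setU1 (I : {set 'I_n}) v :
  independent e (v |: I) = independent e I && (v \in uncovered I).
Proof.
apply/idP/andP => [/independentP ind | [/independentP indI /uncoveredP vI]].
  split; first by apply/independentP => x y xI yI; apply: ind; rewrite inE ?xI ?yI orbT.
  by apply/uncoveredP => u uI; apply: ind; rewrite !inE ?eqxx ?uI ?orbT.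
apply/independentP => x y; rewrite !inE => /predU1P[-> | xI] /predU1P[-> | yI].
- by rewrite edge_irr.
- exact: vI.
- by rewrite edge_sym; apply: vI.
- exact: indI.
Qed.

Hypothesis e_triangle_free : triangle_free e.

Lemma nbhd_uncovered_setD v (J : {set 'I_n}) :
  nbhd v :&: uncovered (J :\: nbhd v) = nbhd v :&: uncovered J.
Proof.
apply/setP => u; rewrite !in_setI [u \in nbhd v]inE; case: (boolP (e v u)) => //= evu.
apply/uncoveredP/uncoveredP => [unc x xJ | unc x /setDP[xJ _]]; last exact: unc.
case: (boolP (e v x)) => evx; last by apply: unc; rewrite !inE evx.
apply/negP => eux.
by apply: (e_triangle_free (x := v) (y := u) (z := x)); rewrite evu eux evx.
Qed.

Lemma independent_setU_nbhd (I A : {set 'I_n}) v :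
  independent e I -> A \subset nbhd v :&: uncovered I -> independent e (I :|: A).
Proof.
move=> /independentP indI /subsetP sub.
have [Nv uncI] : {subset A <= nbhd v} /\ {subset A <= uncovered I}.
  by split=> u /sub; rewrite inE => /andP[].
apply/independentP => x y /setUP[xI | xA] /setUP[yI | yA].
- exact: indI.
- by rewrite edge_sym; move/uncoveredP: (uncI y yA); apply.
- by move/uncoveredP: (uncI x xA); apply.
- have := Nv x xA; have := Nv y yA; rewrite !inE => evy evx.
  apply/negP => exy.
  by apply: (e_triangle_free (x := v) (y := x) (z := y)); rewrite evx exy evy.
Qed.

Lemma mem_uncovered (I : {set 'I_n}) v : independent e I -> v \in I -> v \in uncovered I.
Proof. by move/independentP=> indI vI; apply/uncoveredP => u uI; apply: indI. Qed.

Lemma mem_uncovered_setD_nbhd (J : {set 'I_n}) v : v \in uncovered (J :\: nbhd v).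
Proof. by apply/uncoveredP => u /setDP[_]; rewrite inE. Qed.

Lemma independent_setU_nbhdE (I A : {set 'I_n}) v :
  independent e I -> v \in uncovered I ->
  independent e (I :|: A) && ((I :|: A) :\: nbhd v == I) && ((I :|: A) :&: nbhd v == A)
  = (A \subset nbhd v :&: uncovered I).
Proof.
move=> indI vI; have dIN := uncovered_disjoint vI.
apply/idP/idP => [/andP[/andP[/independentP indIA _] /eqP IAN] | sub].
  rewrite -IAN subsetI subsetIr /=; apply/subsetP => u /setIP[uIA _].
  by apply/uncoveredP => x xI; apply: indIA; rewrite // inE xI.
have AN : A \subset nbhd v by move: sub; rewrite subsetI => /andP[].
rewrite (independent_setU_nbhd indI sub) setDUl setIUl (setDidPl dIN) (disjoint_setI0 dIN).
have -> : A :\: nbhd v = set0 by apply/eqP; rewrite setD_eq0.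
by rewrite (setIidPl AN) setU0 set0U !eqxx.
Qed.

Section Weights.
Local Open Scope R_scope.
Variable lam : R.

Lemma sum_indep_fiber (I : {set 'I_n}) v : independent e I -> v \in uncovered I ->
  \big[Rplus/0]_(J | independent e J && (J :\: nbhd v == I)) lam ^ #|J|
  = lam ^ #|I| * (1 + lam) ^ #|nbhd v :&: uncovered I|.
Proof.
move=> indI vI.
rewrite (reindex_onto (fun A => I :|: A) (fun J => J :&: nbhd v)) /=; last first.
  by move=> J /andP[_ /eqP <-]; rewrite setUC setID.
rewrite -sum_subsets_pow big_distrr /=.
apply: eq_big => A; first exact: independent_setU_nbhdE.
move=> /andP[_ /eqP IAA].
have dIA : [disjoint I & A].
  by rewrite -IAA; apply: disjointWr (subsetIr _ _) (uncovered_disjoint vI).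
by rewrite cardsU (disjoint_setI0 dIA) cards0 subn0 pow_add.
Qed.

Lemma sum_indep_by_nbhd v (g : {set 'I_n} -> R) :
  \big[Rplus/0]_(J | independent e J) (lam ^ #|J| * g (J :\: nbhd v)) =
  \big[Rplus/0]_(I | independent e I && (v \in uncovered I))
     (lam ^ #|I| * (1 + lam) ^ #|nbhd v :&: uncovered I| * g I).
Proof.
rewrite (partition_big (fun J => J :\: nbhd v)
           (fun I => independent e I && (v \in uncovered I))) /=; last first.
  by move=> J indJ; rewrite independent_setD // mem_uncovered_setD_nbhd.
apply: eq_bigr => I /andP[indI vI].
transitivity (g I * \big[Rplus/0]_(J | independent e J && (J :\: nbhd v == I)) lam ^ #|J|).
  by rewrite big_distrr; apply: eq_bigr => J /andP[_ /eqP ->]; rewrite Rmult_comm.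
by rewrite sum_indep_fiber // Rmult_comm.
Qed.

Definition occupied_mass v :=
  \big[Rplus/0]_(I | independent e I && (v \in I)) lam ^ #|I|.

Definition uncovered_mass v :=
  \big[Rplus/0]_(I | independent e I && (v \in uncovered I)) lam ^ #|I|.

Definition nbhd_uncovered_mass v :=
  \big[Rplus/0]_(I | independent e I) (lam ^ #|I| * INR #|nbhd v :&: uncovered I|).

Lemma occupied_massE v : occupied_mass v =
  lam * \big[Rplus/0]_(J | independent e J && (v \in uncovered J) && (v \notin J)) lam ^ #|J|.
Proof.
rewrite /occupied_mass (reindex_onto (fun J => v |: J) (fun I => I :\ v)) /=; last first.
  by move=> I /andP[_ vI]; rewrite setD1K.
rewrite big_distrr /=; apply: eq_big => J.
  rewrite setU11 andbT independent_setU1; case: (boolP (v \in J)) => vJ.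
    have /negbTE-> : (v |: J) :\ v != J by apply/eqP => /setP/(_ v); rewrite setD11 vJ.
    by rewrite !andbF.
  by rewrite setU1K // eqxx !andbT.
by move=> /andP[_ /eqP <-]; rewrite cardsU1 setD11.
Qed.

Lemma uncovered_massE v : 0 < lam -> uncovered_mass v = occupied_mass v * ((1 + lam) / lam).
Proof.
move=> lam_gt0.
have -> : uncovered_mass v = occupied_mass v
    + \big[Rplus/0]_(J | independent e J && (v \in uncovered J) && (v \notin J)) lam ^ #|J|.
  rewrite /uncovered_mass (bigID (fun I : {set 'I_n} => v \in I)) /=; congr (_ + _).
  apply: eq_bigl => I; case: (boolP (v \in I)); rewrite ?andbT ?andbF //.
  by case: (boolP (independent e I)) => //= indI vI; rewrite mem_uncovered.
rewrite occupied_massE; field; lra.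
Qed.

Lemma partition_fn_gt0 : 0 < lam -> 0 < partition_fn e lam.
Proof.
move=> lam_gt0; rewrite /partition_fn (bigD1 set0) /=; last first.
  by apply/independentP => x y; rewrite inE.
rewrite cards0 /=; apply: Rplus_lt_le_0_compat; first lra.
by apply: Rle0_big => I _; apply: pow_le; lra.
Qed.

Lemma sum_occupied_mass : 0 < lam ->
  \big[Rplus/0]_v occupied_mass v = exp_size e lam * partition_fn e lam.
Proof.
move=> lam_gt0; have Z_gt0 := partition_fn_gt0 lam_gt0.
transitivity (\big[Rplus/0]_(I | independent e I) (INR #|I| * lam ^ #|I|)); last first.
  rewrite /exp_size big_distrl; apply: eq_bigr => I _ /=.
  by rewrite /hc_prob /Rdiv !Rmult_assoc Rinv_l ?Rmult_1_r //; lra.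
rewrite /occupied_mass; under eq_bigr => v _ do rewrite big_mkcondr.
rewrite exchange_big; apply: eq_bigr => I _.
by rewrite -big_Rplus_const [RHS]big_mkcond.
Qed.

Lemma partition_fn_by_nbhd v : partition_fn e lam =
  \big[Rplus/0]_(I | independent e I && (v \in uncovered I))
     (lam ^ #|I| * (1 + lam) ^ #|nbhd v :&: uncovered I|).
Proof.
have /= by_nbhd := sum_indep_by_nbhd v (fun _ => 1).
transitivity (\big[Rplus/0]_(J | independent e J) (lam ^ #|J| * 1)).
  by apply: eq_bigr => J _; rewrite Rmult_1_r.
by rewrite by_nbhd; apply: eq_bigr => I _; rewrite Rmult_1_r.
Qed.

Lemma nbhd_uncovered_mass_by_nbhd v : nbhd_uncovered_mass v =
  \big[Rplus/0]_(I | independent e I && (v \in uncovered I))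
     (lam ^ #|I| * (1 + lam) ^ #|nbhd v :&: uncovered I| * INR #|nbhd v :&: uncovered I|).
Proof.
rewrite /nbhd_uncovered_mass; under eq_bigr => J _ do rewrite -nbhd_uncovered_setD.
exact: (sum_indep_by_nbhd v (fun I => INR #|nbhd v :&: uncovered I|)).
Qed.

Lemma uncovered_mass_lower v m : 0 < lam ->
  exp (- (ln (1 + lam) * m)) * ((1 + ln (1 + lam) * m) * partition_fn e lam
                                - ln (1 + lam) * nbhd_uncovered_mass v)
  <= uncovered_mass v.
Proof.
move=> lam_gt0; rewrite (partition_fn_by_nbhd v) nbhd_uncovered_mass_by_nbhd.
have a_ge0 I : independent e I && (v \in uncovered I) ->
    0 <= lam ^ #|I| * (1 + lam) ^ #|nbhd v :&: uncovered I|.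
  by move=> _; apply: Rmult_le_pos; apply: pow_le; lra.
apply: Rle_trans (sum_exp_tangent_lower
  (fun I => INR #|nbhd v :&: uncovered I|) (ln (1 + lam)) m a_ge0) _.
right; apply: eq_bigr => I _.
by rewrite Rmult_assoc pow_mul_exp_opp_ln ?Rmult_1_r //; lra.
Qed.

Lemma sum_uncovered_mass :
  \big[Rplus/0]_v uncovered_mass v
  = \big[Rplus/0]_(I | independent e I) (lam ^ #|I| * INR #|uncovered I|).
Proof.
rewrite /uncovered_mass; under eq_bigr => v _ do rewrite big_mkcondr.
rewrite exchange_big; apply: eq_bigr => I _.
by rewrite -big_mkcond big_Rplus_const Rmult_comm.
Qed.

Lemma sum_nbhd_uncovered_mass_le (d : nat) :
  0 <= lam -> (forall v, (degree e v <= d)%nat) ->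
  \big[Rplus/0]_v nbhd_uncovered_mass v <= INR d * \big[Rplus/0]_v uncovered_mass v.
Proof.
move=> lam_ge0 deg_le.
rewrite sum_uncovered_mass /nbhd_uncovered_mass exchange_big big_distrr /=.
apply: Rle_big => I _; rewrite -big_distrr /= -INR_big.
rewrite (Rmult_comm (INR d)) Rmult_assoc -mult_INR.
apply: Rmult_le_compat_l; first exact: pow_le.
by apply/le_INR/leP; apply: sum_card_nbhd_setI.
Qed.

Definition uncovered_fraction :=
  \big[Rplus/0]_v uncovered_mass v / (INR n * partition_fn e lam).

Lemma exp_le_uncovered_fraction (d : nat) :
  0 < lam -> (0 < n)%nat -> (forall v, (degree e v <= d)%nat) ->
  exp (- (INR d * ln (1 + lam) * uncovered_fraction)) <= uncovered_fraction.
Proof.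
move=> lam_gt0 n_gt0 deg_le.
have n_pos : 0 < INR n by apply/lt_0_INR/ltP.
have Z_gt0 := partition_fn_gt0 lam_gt0.
have nZ_gt0 := Rmult_lt_0_compat _ _ n_pos Z_gt0.
have L_gt0 : 0 < ln (1 + lam) by rewrite -ln_1; apply: ln_increasing; lra.
rewrite /uncovered_fraction.
set L := ln (1 + lam) in L_gt0 *; set Z := partition_fn e lam in Z_gt0 nZ_gt0 *.
set SB := \big[Rplus/0]_v uncovered_mass v.
set ST := \big[Rplus/0]_v nbhd_uncovered_mass v.
set m := ST / (INR n * Z).
have low : exp (- (L * m)) * (INR n * Z) <= SB.
  apply: Rle_trans (Rle_big (fun v _ => uncovered_mass_lower v m lam_gt0)); right.
  rewrite (eq_bigr (fun v => exp (- (L * m)) * ((1 + L * m) * Z)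
                             + - (exp (- (L * m)) * L) * nbhd_uncovered_mass v)); last first.
    by move=> v _; rewrite -/L -/Z; ring.
  rewrite big_split -!big_distrr /= -/ST big_const_ord iter_Rplus /m; field; split; lra.
have m_le : m <= INR d * (SB / (INR n * Z)).
  rewrite /m /Rdiv -Rmult_assoc; apply: Rmult_le_compat_r.
    by apply/Rlt_le/Rinv_0_lt_compat.
  exact: sum_nbhd_uncovered_mass_le (Rlt_le _ _ lam_gt0) deg_le.
have low' : exp (- (L * m)) <= SB / (INR n * Z).
  apply: (Rmult_le_reg_r (INR n * Z)) => //.
  by rewrite /Rdiv Rmult_assoc Rinv_l ?Rmult_1_r //; lra.
apply: Rle_trans low'.
have : - (INR d * L * (SB / (INR n * Z))) <= - (L * m) by nra.
by case=> [lt | ->]; [left; apply: exp_increasing | right].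
Qed.

Lemma uncovered_fractionE : 0 < lam -> (0 < n)%nat ->
  uncovered_fraction = exp_size e lam / INR n * ((1 + lam) / lam).
Proof.
move=> lam_gt0 n_gt0; have n_pos : 0 < INR n by apply/lt_0_INR/ltP.
have Z_gt0 := partition_fn_gt0 lam_gt0.
rewrite /uncovered_fraction; under eq_bigr => v _ do rewrite uncovered_massE //.
by rewrite -big_distrl /= sum_occupied_mass //; field; repeat split; lra.
Qed.

End Weights.
End Graph.

Theorem theorem1p4 (d n : nat) (e : rel 'I_n) (lam w : R) :
  (1 <= d)%N ->
  simple_graph e -> triangle_free e -> max_degree e d ->
  (0 < lam)%R ->
  (0 < w)%R -> (w * exp w = INR d * ln (1 + lam))%R ->
  (lam / (1 + lam) * (w / (INR d * ln (1 + lam))) <= exp_size e lam / INR n)%R.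
Proof.
move=> d_gt0 e_simple e_triangle_free [deg_le [v0 _]] lam_gt0 _ wW.
have n_gt0 : (0 < n)%N by apply: leq_ltn_trans (ltn_ord v0).
have a_gt0 : (0 < INR d * ln (1 + lam))%R.
  apply: Rmult_lt_0_compat; first exact/lt_0_INR/ltP.
  by rewrite -ln_1; apply: ln_increasing; lra.
have := lambert_lower_bound a_gt0 wW
  (exp_le_uncovered_fraction e_simple e_triangle_free lam_gt0 n_gt0 deg_le).
rewrite uncovered_fractionE //; set X := (exp_size e lam / INR n)%R => w_le.
have -> : X = (lam / (1 + lam) * (X * ((1 + lam) / lam)))%R.
  by field; split; lra.
by apply: Rmult_le_compat_l => //; apply: Rlt_le; apply: Rdiv_lt_0_compat; lra.
Qed.
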